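(* Assume that $f$ is convex and $L$-smooth relative to $d$ on $Q$ for some $L>0$, that the Bregman divergence $V$ satisfies the triangular scaling property with scaling factor $\gamma=2$, and that for every $k\ge 0$ the pairs $(f_{\delta_k}(y),\nabla f_{\delta_k}(y))$ used by Algorithm AdapFGM are $(\delta_k,L)$-oracles of $f$ at every point $y\in Q$. Let $x_*$ be a minimizer of $f$ on $Q$, and let $R>0$ satisfy $V(x_*,x_0)\le R^2$. Then for every $N\ge 1$ the iterates of Algorithm AdapFGM (started with $L_0\in(0,2L)$) satisfy $$f(x_N)-f(x_* )\le \frac{8LR^2}{(N+1)^2}+\frac{2\sum_{k=0}^{N-1}A_{k+1}\delta_k}{A_N}.$$
   Context: Setting. $\mathbb{E}$ is a finite-dimensional real vector space with a norm $\|\cdot\|$ and dual space $\mathbb{E}^*$; $\langle g,x\rangle$ denotes the value of $g\in\mathbb{E}^*$ at $x\in\mathbb{E}$. $Q\subset\mathbb{E}$ is a closed convex set. $f:Q\to\mathbb{R}$ is convex and differentiable on an open set containing the relative interior $\mathrm{rint}\,Q$. The prox-function $d:Q\to\mathbb{R}$ is continuously differentiable and $1$-strongly convex with respect to $\|\cdot\|$. The Bregman divergence is $V(x,y)=d(x)-d(y)-\langle\nabla d(y),x-y\rangle$. All minimization subproblems appearing in the algorithms are assumed to have minimizers. Relative smoothness: $f$ is $L$-smooth relative to $d$ on $Q$ if $f(y)\le f(x)+\langle\nabla f(x),y-x\rangle+LV(y,x)$ for all $x\in\mathrm{rint}\,Q$, $y\in Q$. Triangular scaling property with factor $\gamma>0$: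 $V((1-\theta)x+\theta z,(1-\theta)x+\theta\tilde z)\le\theta^{\gamma}V(z,\tilde z)$ for all $x,z,\tilde z\in Q$ and all $\theta\in[0,1]$. $(\delta,L)$-oracle: a pair $(f_\delta(y),\nabla f_\delta(y))\in\mathbb{R}\times\mathbb{E}^*$ is a $(\delta,L)$-oracle of $f$ at $y$ if $0\le f(x)-\big(f_\delta(y)+\langle\nabla f_\delta(y),x-y\rangle\big)\le LV(x,y)+\delta$ for all $x\in Q$. Algorithm AdapFGM. Input: $x_0\in Q$, positive numbers $\{\delta_k\}_{k\ge0}$, and $L_0>0$. Set $y_0=u_0=x_0$, $\alpha_0=0$, $A_0=0$. For $k=0,1,2,\dots$: find the smallest integer $i_k\ge0$ such that, with $L_{k+1}=2^{i_k-1}L_k$, $\alpha_{k+1}$ the largest root of $A_k+\alpha=L_{k+1}\alpha^2$, $A_{k+1}=A_k+\alpha_{k+1}$ (so $A_{k+1}=L_{k+1}\alpha_{k+1}^2$), $y_{k+1}=\frac{\alpha_{k+1}u_k+A_kx_k}{A_{k+1}}$, $u_{k+1}=\arg\min_{x\in Q}\{\alpha_{k+1}\langle\nabla f_{\delta_k}(y_{k+1}),x-y_{k+1}\rangle+V(x,u_k)\}$, $x_{k+1}=\frac{\alpha_{k+1}u_{k+1}+A_kx_k}{A_{k+1}}$, the inequality $f_{\delta_k}(x_{k+1})\le f_{\delta_k}(y_{k+1})+\langle\nabla f_{\delta_k}(y_{k+1}),x_{k+1}-y_{k+1}\rangle+L_{k+1}V(x_{k+1},y_{k+1})+\delta_k$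 holds; these $L_{k+1},\alpha_{k+1},A_{k+1},y_{k+1},u_{k+1},x_{k+1}$ are the next iterates. *)

From HB Require Import structures.
From mathcomp Require Import all_boot all_order all_algebra.
From mathcomp Require Import all_classical all_reals all_analysis.
Set Implicit Arguments. Unset Strict Implicit. Unset Printing Implicit Defensive.
Import Order.TTheory GRing.Theory Num.Theory.
Import numFieldNormedType.Exports.
Local Open Scope classical_set_scope.
Local Open Scope ring_scope.

(* The space E is R^n realised as row vectors 'rV[R]_n; its dual E^* is
   identified with 'rV[R]_n through the pairing below. *)
Definition dual_pair (R : realType) (n : nat) (g x : 'rV[R]_n) : R :=
  \sum_(i < n) g 0 i * x 0 i.

Definition is_norm (R : realType) (n : nat) (nrm : 'rV[R]_n -> R) : Prop :=
  (forall x y, nrm (x + y) <= nrm x + nrm y) /\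
  (forall (a : R) x, nrm (a *: x) = `|a| * nrm x) /\
  (forall x, nrm x = 0 -> x = 0).

Definition convex_set_E (R : realType) (n : nat) (Q : set 'rV[R]_n) : Prop :=
  forall x y (t : R), Q x -> Q y -> 0 <= t <= 1 -> Q (t *: x + (1 - t) *: y).

Definition convex_fun_on (R : realType) (n : nat) (Q : set 'rV[R]_n)
  (f : 'rV[R]_n -> R) : Prop :=
  forall x y (t : R), Q x -> Q y -> 0 <= t <= 1 ->
    f (t *: x + (1 - t) *: y) <= t * f x + (1 - t) * f y.

Definition strongly_convex1_on (R : realType) (n : nat) (nrm : 'rV[R]_n -> R)
  (Q : set 'rV[R]_n) (d : 'rV[R]_n -> R) : Prop :=
  forall x y (t : R), Q x -> Q y -> 0 <= t <= 1 ->
    d (t *: x + (1 - t) *: y)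
      <= t * d x + (1 - t) * d y - t * (1 - t) / 2 * nrm (x - y) ^+ 2.

Definition aff_hull (R : realType) (n : nat) (Q : set 'rV[R]_n) : set 'rV[R]_n :=
  [set z | exists (m : nat) (p : 'I_m -> 'rV[R]_n) (w : 'I_m -> R),
     (forall i, Q (p i)) /\ \sum_(i < m) w i = 1 /\ z = \sum_(i < m) w i *: p i].

Definition rint (R : realType) (n : nat) (nrm : 'rV[R]_n -> R)
  (Q : set 'rV[R]_n) : set 'rV[R]_n :=
  [set x | Q x /\ exists e : R, 0 < e /\
     forall z, aff_hull Q z -> nrm (z - x) < e -> Q z].

Definition bregman (R : realType) (n : nat) (d : 'rV[R]_n -> R)
  (x y : 'rV[R]_n) : R :=
  d x - d y - 'd d y (x - y).

Definition rel_smooth (R : realType) (n : nat) (nrm : 'rV[R]_n -> R)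
  (Q : set 'rV[R]_n) (f d : 'rV[R]_n -> R) (L : R) : Prop :=
  forall x y, rint nrm Q x -> Q y ->
    f y <= f x + 'd f x (y - x) + L * bregman d y x.

Definition tri_scaling (R : realType) (n : nat) (Q : set 'rV[R]_n)
  (d : 'rV[R]_n -> R) (gamma : R) : Prop :=
  forall x z zt (theta : R), Q x -> Q z -> Q zt -> 0 <= theta <= 1 ->
    bregman d ((1 - theta) *: x + theta *: z) ((1 - theta) *: x + theta *: zt)
      <= theta `^ gamma * bregman d z zt.

Definition is_oracle (R : realType) (n : nat) (Q : set 'rV[R]_n)
  (f d : 'rV[R]_n -> R) (delta L : R) (y : 'rV[R]_n) (fy : R) (gy : 'rV[R]_n)
  : Prop :=
  forall x, Q x ->
    0 <= f x - (fy + dual_pair gy (x - y)) /\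
    f x - (fy + dual_pair gy (x - y)) <= L * bregman d x y + delta.

Definition is_argmin (R : realType) (n : nat) (Q : set 'rV[R]_n)
  (phi : 'rV[R]_n -> R) (m : 'rV[R]_n) : Prop :=
  Q m /\ forall z, Q z -> phi m <= phi z.

Definition largest_root (R : realType) (Ak Lk1 alpha : R) : Prop :=
  Ak + alpha = Lk1 * alpha ^+ 2 /\
  forall b, Ak + b = Lk1 * b ^+ 2 -> b <= alpha.

(* One trial of iteration k of AdapFGM with trial constant L':
   computes alpha', A' = Ak + alpha', y', u' (an argmin), x'. *)
Definition adap_trial (R : realType) (n : nat) (Q : set 'rV[R]_n)
  (d : 'rV[R]_n -> R) (fo : 'rV[R]_n -> R) (go : 'rV[R]_n -> 'rV[R]_n)
  (Ak : R) (xk uk : 'rV[R]_n)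
  (L' alpha' A' : R) (y' u' x' : 'rV[R]_n) : Prop :=
  [/\ largest_root Ak L' alpha',
      A' = Ak + alpha',
      y' = (alpha' / A') *: uk + (Ak / A') *: xk,
      is_argmin Q (fun z => alpha' * dual_pair (go y') (z - y') + bregman d z uk) u'
    & x' = (alpha' / A') *: u' + (Ak / A') *: xk].

Definition adap_test (R : realType) (n : nat) (d : 'rV[R]_n -> R)
  (fo : 'rV[R]_n -> R) (go : 'rV[R]_n -> 'rV[R]_n) (delta L' : R)
  (y' x' : 'rV[R]_n) : Prop :=
  fo x' <= fo y' + dual_pair (go y') (x' - y') + L' * bregman d x' y' + delta.

(* A complete run of Algorithm AdapFGM: sequences Ls (L_k), al (alpha_k),
   A (A_k), y, u, x, and the line-search exponents i_k.  The oracle used at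
   iteration k is (fo k, go k) = (f_{delta_k}, grad f_{delta_k}). *)
Definition adapfgm_run (R : realType) (n : nat) (Q : set 'rV[R]_n)
  (d : 'rV[R]_n -> R) (fo : nat -> 'rV[R]_n -> R)
  (go : nat -> 'rV[R]_n -> 'rV[R]_n) (delta : nat -> R)
  (x0 : 'rV[R]_n) (L0 : R)
  (Ls al A : nat -> R) (y u x : nat -> 'rV[R]_n) (i : nat -> nat) : Prop :=
  [/\ Ls 0%N = L0, al 0%N = 0 /\ A 0%N = 0, y 0%N = x0 /\ u 0%N = x0 /\ x 0%N = x0 &
   forall k : nat,
     [/\ Ls k.+1 = 2 ^+ (i k) / 2 * Ls k,
         adap_trial Q d (fo k) (go k) (A k) (x k) (u k)
           (Ls k.+1) (al k.+1) (A k.+1) (y k.+1) (u k.+1) (x k.+1),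
         adap_test d (fo k) (go k) (delta k) (Ls k.+1) (y k.+1) (x k.+1)
       & forall j : nat, (j < i k)%N ->
           exists (a' A' : R) (y' u' x' : 'rV[R]_n),
             adap_trial Q d (fo k) (go k) (A k) (x k) (u k)
               (2 ^+ j / 2 * Ls k) a' A' y' u' x' /\
             ~ adap_test d (fo k) (go k) (delta k) (2 ^+ j / 2 * Ls k) y' x']].

From HB Require Import structures.
From mathcomp Require Import all_boot all_order all_algebra.
From mathcomp Require Import all_classical all_reals all_analysis.
From mathcomp Require Import ring lra.

Set Implicit Arguments.
Unset Strict Implicit.
Unset Printing Implicit Defensive.

Import Order.TTheory GRing.Theory Num.Theory.
Import numFieldNormedType.Exports.
Local Open Scope classical_set_scope.
Local Open Scope ring_scope.

(** Each accepted step of AdapFGM satisfies, for every [z] in [Q],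
    [A_{k+1} f(x_{k+1}) <= A_k f(x_k) + alpha_{k+1} f(z) + V(z,u_k) - V(z,u_{k+1}) + 2 A_{k+1} delta_k]:
    the lower linear model of [f] supplied by the oracle at [y_{k+1}] is affine, the prox
    step gives the three-point inequality, and triangular scaling with [gamma = 2] turns
    [L_{k+1} V(x_{k+1},y_{k+1})] into [V(u_{k+1},u_k) / A_{k+1}] because
    [A_{k+1} = L_{k+1} alpha_{k+1}^2].  Summing these inequalities telescopes.
    Every trial constant [>= L] passes the line-search test, so the accepted ones stay
    below [2L], whence [sqrt A_{k+1} - sqrt A_k >= 1 / (2 sqrt (2L))] and [A_N >= (N+1)^2 / (8L)]. *)

Section Differential.
Variables (R : realType) (n : nat) (d : 'rV[R]_n -> R) (u v : 'rV[R]_n).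
Hypothesis du : differentiable d u.

Lemma diff_quotient_at_right :
  (fun h : R => h^-1 * (d (h *: v + u) - d u)) @ 0^'+ --> 'd d u v.
Proof.
rewrite -deriveE //.
have /cvg_ex[l hl] : derivable d u v by exact: diff_derivable.
rewrite /derive (cvg_lim _ hl) //.
apply: cvg_trans hl; apply: cvg_app => A [e e0 Ae].
by exists e => // h he h0; apply: Ae => //; exact: lt0r_neq0.
Qed.

Lemma diff_ge_quotient c :
  (forall t : R, 0 < t <= 1 -> t * c <= d (t *: v + u) - d u) -> c <= 'd d u v.
Proof.
move=> H; apply: cvgr_to_ge diff_quotient_at_right _.
near=> h; have h0 : 0 < h by near: h; exact: nbhs_right_gt.
have h1 : h <= 1 by near: h; exact: nbhs_right_le.
by rewrite ler_pdivlMl //; apply: H; rewrite h0 h1.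
Unshelve. all: by end_near. Qed.

Lemma diff_le_quotient c :
  (forall t : R, 0 < t <= 1 -> d (t *: v + u) - d u <= t * c) -> 'd d u v <= c.
Proof.
move=> H; apply: cvgr_to_le diff_quotient_at_right _.
near=> h; have h0 : 0 < h by near: h; exact: nbhs_right_gt.
have h1 : h <= 1 by near: h; exact: nbhs_right_le.
by rewrite ler_pdivrMl //; apply: H; rewrite h0 h1.
Unshelve. all: by end_near. Qed.
End Differential.

Lemma convex_combE (R : pzRingType) (V : lmodType R) (x z : V) (t : R) :
  t *: x + (1 - t) *: z = t *: (x - z) + z.
Proof. by rewrite scalerBr scalerBl scale1r addrCA addrC. Qed.

Section DualPair.
Variables (R : realType) (n : nat).
Implicit Types (g x y : 'rV[R]_n).

Lemma dual_pairD g x y : dual_pair g (x + y) = dual_pair g x + dual_pair g y.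
Proof. by rewrite /dual_pair -big_split; apply: eq_bigr => i _; rewrite mxE mulrDr. Qed.

Lemma dual_pairZ g (a : R) x : dual_pair g (a *: x) = a * dual_pair g x.
Proof. by rewrite /dual_pair mulr_sumr; apply: eq_bigr => i _; rewrite mxE mulrCA. Qed.

Lemma dual_pairB g x y : dual_pair g (x - y) = dual_pair g x - dual_pair g y.
Proof. by rewrite -scaleN1r dual_pairD dual_pairZ mulN1r. Qed.

Lemma dual_pairxx g x : dual_pair g (x - x) = 0.
Proof. by rewrite dual_pairB subrr. Qed.

End DualPair.

Section Bregman.
Variables (R : realType) (n : nat) (d : 'rV[R]_n -> R).
Implicit Types (x z u w : 'rV[R]_n).

Lemma bregmanxx x : bregman d x x = 0.
Proof. by rewrite /bregman !subrr raddf0 subrr. Qed.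

Lemma bregman_three_point z u w :
  bregman d z u - bregman d z w - bregman d w u = 'd d w (z - w) - 'd d u (z - w).
Proof.
have dD : 'd d u (z - u) = 'd d u (z - w) + 'd d u (w - u).
  by rewrite -raddfD addrA subrK.
(* Comparing differentials at distinct points makes [lra] and [rewrite]
   unfold [diff]; the identity is therefore stated over opaque reals. *)
have identity (a b c p q r s : R) :
  p = q + r -> a - b - p - (a - c - s) - (c - b - r) = s - q.
  by move=> ->; ring.
exact: identity dD.
Qed.

Lemma bregman_ge0 (nrm : 'rV[R]_n -> R) (Q : set 'rV[R]_n) z u :
  strongly_convex1_on nrm Q d -> Q z -> Q u -> differentiable d u ->
  0 <= bregman d z u.
Proof.
move=> sc Qz Qu du; rewrite /bregman subr_ge0.
apply: diff_le_quotient => // t /andP[t0 t1].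
have := sc z u t Qz Qu; rewrite (ltW t0) t1 => /(_ isT).
rewrite convex_combE.
have : 0 <= t * (1 - t) / 2 * nrm (z - u) ^+ 2.
  by rewrite mulr_ge0 ?sqr_ge0 // mulr_ge0 // mulr_ge0; lra.
lra.
Qed.

Lemma argmin_three_point (Q : set 'rV[R]_n) (a : R) g y u w z :
  convex_set_E Q -> (forall v, Q v -> differentiable d v) ->
  is_argmin Q (fun v => a * dual_pair g (v - y) + bregman d v u) w -> Q z ->
  a * dual_pair g (w - z) <= bregman d z u - bregman d z w - bregman d w u.
Proof.
move=> cQ dQ [Qw minw] Qz; rewrite bregman_three_point lerBrDr.
apply: diff_ge_quotient; first exact: dQ.
move=> t /andP[t0 t1].
have Qwt : Q (t *: (z - w) + w) by rewrite -convex_combE; apply: cQ; rewrite ?(ltW t0).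
have dD : 'd d u (t *: (z - w) + (w - u)) = t * 'd d u (z - w) + 'd d u (w - u).
  by rewrite linearD linearZ.
have := minw _ Qwt; rewrite /bregman -[t *: _ + w - y]addrA -[t *: _ + w - u]addrA dD.
rewrite (dual_pairD g (t *: _)) dual_pairZ (dual_pairB g w z) (dual_pairB g z w).
lra.
Qed.

End Bregman.

Lemma largest_root_gt0 (R : realType) (Ak L' a : R) :
  0 <= Ak -> 0 < L' -> largest_root Ak L' a -> 0 < a.
Proof.
move=> Ak0 L'0 [_ maxa].
set s := Num.sqrt (1 + 4 * L' * Ak).
have s2 : s ^+ 2 = 1 + 4 * L' * Ak by rewrite sqr_sqrtr // addr_ge0 // !mulr_ge0 // ltW.
have /maxa : Ak + (1 + s) / (2 * L') = L' * ((1 + s) / (2 * L')) ^+ 2.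
  have L'_neq0 : L' != 0 by rewrite gt_eqF.
  have -> : Ak = (s ^+ 2 - 1) / (4 * L') by rewrite s2; field.
  by field.
apply: lt_le_trans; apply: divr_gt0; last lra.
by rewrite ltr_pwDl ?sqrtr_ge0.
Qed.

Section Trial.
Variables (R : realType) (n : nat) (Q : set 'rV[R]_n) (d : 'rV[R]_n -> R).
Variables (fo : 'rV[R]_n -> R) (go : 'rV[R]_n -> 'rV[R]_n).
Variables (Ak L' a A' : R) (xk uk y' u' x' : 'rV[R]_n).
Hypotheses (cQ : convex_set_E Q) (Ak_ge0 : 0 <= Ak) (L'_gt0 : 0 < L').
Hypotheses (Qxk : Q xk) (Quk : Q uk).
Hypothesis trial : adap_trial Q d fo go Ak xk uk L' a A' y' u' x'.

Lemma adap_trial_gt0 : 0 < a /\ 0 < A'.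
Proof.
case: trial => rt eA' _ _ _; have Ak0 := Ak_ge0.
have a_gt0 := largest_root_gt0 Ak0 L'_gt0 rt; split=> //; lra.
Qed.

Lemma adap_trial_weights : Ak / A' = 1 - a / A' /\ 0 <= a / A' <= 1.
Proof.
have [a_gt0 A'_gt0] := adap_trial_gt0; have Ak0 := Ak_ge0.
case: trial => _ eA' _ _ _; have A'_neq0 : A' != 0 by rewrite gt_eqF.
split; first by move: A'_neq0; rewrite eA' => ?; field.
by rewrite divr_ge0 ?(ltW a_gt0) ?(ltW A'_gt0) //= ler_pdivrMr // mul1r; lra.
Qed.

Lemma adap_trial_mem : [/\ Q y', Q u' & Q x'].
Proof.
have [eAk theta01] := adap_trial_weights.
case: trial => _ _ -> [Qu' _] ->; rewrite eAk.
by split=> //; apply: cQ.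
Qed.

Variables (f : 'rV[R]_n -> R) (delta L : R).
Hypothesis dQ : forall z, Q z -> differentiable d z.
Hypothesis oracle : forall z, Q z -> is_oracle Q f d delta L z (fo z) (go z).

Lemma adap_test_of_le (nrm : 'rV[R]_n -> R) :
  strongly_convex1_on nrm Q d -> L <= L' -> adap_test d fo go delta L' y' x'.
Proof.
move=> sc LL'; have [Qy' _ Qx'] := adap_trial_mem.
have [_ upper] := oracle Qy' Qx'.
have [lower _] := oracle Qx' Qx'; rewrite dual_pairxx addr0 in lower.
have V_ge0 := bregman_ge0 sc Qx' Qy' (dQ Qy').
have : L * bregman d x' y' <= L' * bregman d x' y' by rewrite ler_wpM2r.
rewrite /adap_test; lra.
Qed.

Lemma adap_trial_estimate z :
  tri_scaling Q d 2 -> Q z -> adap_test d fo go delta L' y' x' ->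
  A' * f x' <= Ak * f xk + a * f z + bregman d z uk - bregman d z u' + 2 * A' * delta.
Proof.
move=> scaling Qz test.
have [a_gt0 A'_gt0] := adap_trial_gt0; have [Qy' Qu' Qx'] := adap_trial_mem.
have [eAk theta01] := adap_trial_weights; have Ak0 := Ak_ge0.
case: trial => [[root _] eA' ey' argmin ex'].
pose g := go y'; pose model w := fo y' + dual_pair g (w - y').
have model_le w : Q w -> model w <= f w.
  by move=> Qw; have [lower _] := oracle Qy' Qw; rewrite -subr_ge0.
have upper : f x' <= model x' + L' * bregman d x' y' + 2 * delta.
  have [_ fx'] := oracle Qx' Qx'.
  by move: fx' test; rewrite dual_pairxx addr0 bregmanxx mulr0 /adap_test /model; lra.
have model_x' : A' * model x' = Ak * model xk + a * model u'.
  rewrite /model ex' eAk !dual_pairB !dual_pairD !dual_pairZ.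
  by rewrite eA'; field; lra.
have model_u' : model u' = model z + dual_pair g (u' - z).
  by rewrite /model !dual_pairB; ring.
have step := argmin_three_point cQ dQ argmin Qz.
have shrink : A' * (L' * bregman d x' y') <= bregman d u' uk.
  have := scaling _ _ _ _ Qxk Qu' Quk theta01.
  rewrite (powR_mulrn 2) ?(andP theta01).1 // [_ + _ *: u']addrC [_ + _ *: uk]addrC.
  rewrite -eAk -ex' -ey' => /(ler_wpM2l (mulr_ge0 (ltW A'_gt0) (ltW L'_gt0))).
  have unit : A' * L' * (a / A') ^+ 2 = 1.
    have A'_neq0 : A' != 0 by rewrite gt_eqF.
    have A'E : A' = L' * a ^+ 2 by rewrite eA' root.
    by rewrite expr_div_n -mulrA (mulrA L') -A'E; field.
  by rewrite mulrA [X in _ <= X -> _]mulrA unit mul1r.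
have := ler_wpM2l (ltW A'_gt0) upper.
have := ler_wpM2l Ak0 (model_le _ Qxk).
have := ler_wpM2l (ltW a_gt0) (model_le _ Qz).
rewrite model_u' in model_x'; lra.
Qed.

End Trial.

Section RootGrowth.
Variables (R : realType) (Ak a L' M : R).

Lemma sqrt_root_le : 0 <= Ak -> 0 < a -> Ak + a = L' * a ^+ 2 -> L' <= M ->
  Num.sqrt (Ak + a) <= Num.sqrt M * a.
Proof.
move=> Ak0 a_gt0 root LM.
have L'_ge0 : 0 <= L'.
  by rewrite -(pmulr_lge0 _ (exprn_gt0 2 a_gt0)) -root addr_ge0 // ltW.
have M_ge0 : 0 <= M := le_trans L'_ge0 LM.
have : Num.sqrt (Ak + a) <= Num.sqrt (M * a ^+ 2).
  by rewrite ler_sqrt ?(mulr_ge0 M_ge0 (sqr_ge0 a)) // root ler_wpM2r ?sqr_ge0.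
by rewrite sqrtrM // sqrtr_sqr ger0_norm // ltW.
Qed.

Lemma sqrt_increment_ge : 0 <= Ak -> 0 < a -> Ak + a = L' * a ^+ 2 -> L' <= M ->
  1 <= 2 * Num.sqrt M * (Num.sqrt (Ak + a) - Num.sqrt Ak).
Proof.
move=> Ak0 a_gt0 root LM; have := sqrt_root_le Ak0 a_gt0 root LM.
set s' := Num.sqrt (Ak + a); set s := Num.sqrt Ak; set m := Num.sqrt M.
have s'2 : s' ^+ 2 = Ak + a by rewrite sqr_sqrtr // addr_ge0 // ltW.
have s2 : s ^+ 2 = Ak by rewrite sqr_sqrtr.
have s_ge0 : 0 <= s by exact: sqrtr_ge0.
have ss' : s <= s' by rewrite ler_sqrt ?addr_ge0 ?lerDl // ltW.
have s'_gt0 : 0 < s' by rewrite sqrtr_gt0 ltr_wpDl.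
have m_ge0 : 0 <= m by exact: sqrtr_ge0.
have a_le : a <= 2 * s' * (s' - s) by nra.
move=> /le_trans/(_ (ler_wpM2l m_ge0 a_le)).
by rewrite -(ler_pM2l s'_gt0) mulr1; nra.
Qed.

End RootGrowth.

Section Run.
Variables (R : realType) (n : nat) (nrm : 'rV[R]_n -> R) (Q : set 'rV[R]_n).
Variables (f d : 'rV[R]_n -> R) (L : R).
Variables (fo : nat -> 'rV[R]_n -> R) (go : nat -> 'rV[R]_n -> 'rV[R]_n).
Variables (delta : nat -> R) (x0 : 'rV[R]_n) (L0 : R).
Variables (Ls al A : nat -> R) (y u x : nat -> 'rV[R]_n) (i : nat -> nat).
Hypotheses (cQ : convex_set_E Q) (dQ : forall z, Q z -> differentiable d z).
Hypotheses (sc : strongly_convex1_on nrm Q d) (scaling : tri_scaling Q d 2).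
Hypothesis oracle : forall k z, Q z -> is_oracle Q f d (delta k) L z (fo k z) (go k z).
Hypotheses (Qx0 : Q x0) (L0_gt0 : 0 < L0) (L0_lt : L0 < 2 * L).
Hypothesis run : adapfgm_run Q d fo go delta x0 L0 Ls al A y u x i.

Lemma run_Ls_succ_bound k : 0 < Ls k -> Ls k < 2 * L -> 0 <= A k -> Q (x k) -> Q (u k) ->
  0 < Ls k.+1 < 2 * L.
Proof.
move=> Lk_gt0 Lk_lt Ak0 Qxk Quk; case: run => _ _ _ /(_ k)[-> _ _ failed].
have trial_gt0 j : 0 < 2 ^+ j / 2 * Ls k by rewrite !mulr_gt0 ?exprn_gt0.
rewrite trial_gt0 /=; case ik: (i k) => [|j]; first by rewrite expr0; lra.
have jk : (j < i k)%N by rewrite ik.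
have [a' [A' [y' [u' [x' [trial fail]]]]]] := failed j jk.
have : 2 ^+ j / 2 * Ls k < L.
  rewrite ltNge; apply/negP => LL'; apply: fail.
  by apply: (adap_test_of_le cQ Ak0 _ Qxk Quk trial dQ (oracle k) sc LL'); apply: trial_gt0.
by rewrite exprS; lra.
Qed.

Lemma run_feasible k : [/\ 0 < Ls k, Ls k < 2 * L, 0 <= A k, Q (x k) & Q (u k)].
Proof.
elim: k => [|k [Lk_gt0 Lk_lt Ak0 Qxk Quk]].
  by case: run => -> [_ ->] [_ [-> ->]] _; split.
have /andP[Lk1_gt0 Lk1_lt] := run_Ls_succ_bound Lk_gt0 Lk_lt Ak0 Qxk Quk.
case: run => _ _ _ /(_ k)[_ trial _ _].
have [_ A_gt0] := adap_trial_gt0 Ak0 Lk1_gt0 trial.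
have [_ Qu Qx] := adap_trial_mem cQ Ak0 Lk1_gt0 Qxk Quk trial.
by split=> //; apply: ltW.
Qed.

Lemma run_estimate z k : Q z ->
  A k * f (x k) <= A k * f z + bregman d z x0 - bregman d z (u k)
                   + 2 * \sum_(j < k) A j.+1 * delta j.
Proof.
move=> Qz; elim: k => [|k IH].
  case: run => _ [_ ->] [_ [-> _]] _.
  by rewrite big_ord0 mulr0 !mul0r; lra.
have [_ _ Ak0 Qxk Quk] := run_feasible k.
have [Lk1_gt0 _ _ _ _] := run_feasible k.+1.
case: run => _ _ _ /(_ k)[_ trial test _].
have := adap_trial_estimate cQ Ak0 Lk1_gt0 Qxk Quk trial dQ (oracle k) scaling Qz test.
case: trial => _ eA' _ _ _; rewrite big_ord_recr /=.
have : A k.+1 * f z = A k * f z + al k.+1 * f z by rewrite eA' mulrDl.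
lra.
Qed.

Lemma run_sqrt_growth k :
  k.+2%:R <= 2 * Num.sqrt (2 * L) * Num.sqrt (A k.+1).
Proof.
elim: k => [|k IH].
  have [_ _ A0_ge0 _ _] := run_feasible 0.
  have [L1_gt0 L1_lt _ _ _] := run_feasible 1.
  case: run => _ [_ A0] _ /(_ 0%N)[_ trial _ _].
  have [a_gt0 A1_gt0] := adap_trial_gt0 A0_ge0 L1_gt0 trial.
  case: trial => [[root _] eA' _ _ _].
  have := sqrt_root_le A0_ge0 a_gt0 root (ltW L1_lt); rewrite -eA'.
  have -> : al 1%N = Num.sqrt (A 1%N) ^+ 2 by rewrite sqr_sqrtr ?ltW // eA' A0 add0r.
  rewrite expr2 mulrA -{1}[Num.sqrt (A 1%N)]mul1r ler_pM2r ?sqrtr_gt0 //.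
  lra.
have [_ _ Ak0 _ _] := run_feasible k.+1.
have [Lk_gt0 Lk_lt _ _ _] := run_feasible k.+2.
case: run => _ _ _ /(_ k.+1)[_ trial _ _].
have [a_gt0 _] := adap_trial_gt0 Ak0 Lk_gt0 trial.
case: trial => [[root _] eA' _ _ _].
have := sqrt_increment_ge Ak0 a_gt0 root (ltW Lk_lt).
rewrite -eA' -natr1; lra.
Qed.

Lemma run_growth k : k.+2%:R ^+ 2 <= 8 * L * A k.+1.
Proof.
have [_ _ Ak0 _ _] := run_feasible k.+1.
have [Ls0_gt0 Ls0_lt _ _ _] := run_feasible 0.
have growth := run_sqrt_growth k.
have := ler_pM (ler0n _ _) (ler0n _ _) growth growth.
rewrite -!expr2 !exprMn !sqr_sqrtr //; lra.
Qed.

Lemma run_rate z (Rad : R) N : Q z -> bregman d z x0 <= Rad ^+ 2 -> (1 <= N)%N ->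
  f (x N) - f z <= 8 * L * Rad ^+ 2 / (N%:R + 1) ^+ 2
                   + 2 * (\sum_(k < N) A k.+1 * delta k) / A N.
Proof.
case: N => [//|k] Qz V0 _; rewrite natr1.
have [_ _ _ _ Qu] := run_feasible k.+1.
have est := run_estimate k.+1 Qz; have V_ge0 := bregman_ge0 sc Qz Qu (dQ Qu).
have growth := run_growth k.
have K_gt0 : 0 < k.+2%:R ^+ 2 :> R by rewrite exprn_gt0 ?ltr0n.
have [Ls0_gt0 Ls0_lt _ _ _] := run_feasible 0.
have A_gt0 : 0 < A k.+1.
  have L8_gt0 : 0 < 8 * L by lra.
  by rewrite -(pmulr_rgt0 _ L8_gt0) (lt_le_trans K_gt0 growth).
set S := \sum_(j < k.+1) _ in est *.
apply: (@le_trans _ _ ((Rad ^+ 2 + 2 * S) / A k.+1)).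
  by rewrite ler_pdivlMr //; lra.
rewrite mulrDl lerD2r ler_pdivrMr // mulrAC ler_pdivlMr //.
have := ler_wpM2l (sqr_ge0 Rad) growth; lra.
Qed.

End Run.

Theorem theorem1 (R : realType) (n : nat) (nrm : 'rV[R]_n -> R)
  (Q : set 'rV[R]_n) (f d : 'rV[R]_n -> R) (L : R)
  (fo : nat -> 'rV[R]_n -> R) (go : nat -> 'rV[R]_n -> 'rV[R]_n)
  (delta : nat -> R) (x0 xs : 'rV[R]_n) (L0 Rad : R)
  (Ls al A : nat -> R) (y u x : nat -> 'rV[R]_n) (i : nat -> nat) :
  is_norm nrm ->
  closed Q -> convex_set_E Q ->
  convex_fun_on Q f ->
  (exists U : set 'rV[R]_n, open U /\ rint nrm Q `<=` U /\
     forall z, U z -> differentiable f z) ->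
  (forall z, Q z -> differentiable d z) ->
  (forall v : 'rV[R]_n, {within Q, continuous (fun z => 'd d z v)}) ->
  strongly_convex1_on nrm Q d ->
  0 < L -> rel_smooth nrm Q f d L ->
  tri_scaling Q d 2 ->
  (forall k, 0 < delta k) ->
  (forall k z, Q z -> is_oracle Q f d (delta k) L z (fo k z) (go k z)) ->
  Q x0 -> 0 < L0 -> L0 < 2 * L ->
  adapfgm_run Q d fo go delta x0 L0 Ls al A y u x i ->
  Q xs -> (forall z, Q z -> f xs <= f z) ->
  0 < Rad -> bregman d xs x0 <= Rad ^+ 2 ->
  forall N : nat, (1 <= N)%N ->
    f (x N) - f xs <= 8 * L * Rad ^+ 2 / (N%:R + 1) ^+ 2
                      + 2 * (\sum_(k < N) A k.+1 * delta k) / A N.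
Proof.
move=> _ _ cQ _ _ dQ _ sc _ _ scaling _ oracle Qx0 L0_gt0 L0_lt run Qxs _ _ V0 N N_gt0.
exact: run_rate cQ dQ sc scaling oracle Qx0 L0_gt0 L0_lt run _ _ _ Qxs V0 N_gt0.
Qed.
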